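(* Let $G$ be a tree with $p\ge 2$ vertices $v_1,\dots,v_p$. Then for every $i=1,\dots,p$, $\psi_i(\pm1)=(\mp1)^{p-1}$, and $\widetilde\psi(\pm1)=(p-1)(\mp1)^{p-2}$.
   Context: For a finite simple graph $G$ with vertices $v_1,\dots,v_p$, let $D=\mathrm{diag}(d(v_1),\dots,d(v_p))$ be the degree matrix and $A$ the adjacency matrix ($a_{vw}=1$ if $v,w$ adjacent, else $0$). Let $\psi(z)=\det(-zD+A)$ and, for each $i$, $\psi_i(z)=\det(-zD_i+A_i)$ where $D_i$, $A_i$ are the principal submatrices of $D$, $A$ obtained by deleting the row and column corresponding to $v_i$. For a tree, $\psi(\pm1)=0$ (known fact), and $\widetilde\psi(z):=\psi(z)/(z^2-1)$ is a polynomial. *)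

From mathcomp Require Import all_boot all_order all_algebra.
Set Implicit Arguments.
Unset Strict Implicit.
Unset Printing Implicit Defensive.
Import GRing.Theory Num.Theory.
Local Open Scope ring_scope.

Definition simple_graph (p : nat) (e : rel 'I_p) : Prop :=
  symmetric e /\ irreflexive e.

Definition gconnected (p : nat) (e : rel 'I_p) : Prop :=
  forall x y : 'I_p, connect e x y.

Definition acyclic (p : nat) (e : rel 'I_p) : Prop :=
  forall c : seq 'I_p, (3 <= size c)%N -> uniq c -> ~~ cycle e c.

Definition is_tree (p : nat) (e : rel 'I_p) : Prop :=
  [/\ simple_graph e, gconnected e & acyclic e].

Definition deg (p : nat) (e : rel 'I_p) (v : 'I_p) : nat := #|[pred w | e v w]|.

Definition zDA (p : nat) (e : rel 'I_p) : 'M[{poly rat}]_p :=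
  \matrix_(i, j) ((- 'X) * ((i == j)%:R * (deg e i)%:R) + (e i j)%:R).

Definition psi (p : nat) (e : rel 'I_p) : {poly rat} := \det (zDA e).

Definition psi_i (p : nat) (e : rel 'I_p) (i : 'I_p) : {poly rat} :=
  \det (row' i (col' i (zDA e))).

Definition psit (p : nat) (e : rel 'I_p) : {poly rat} :=
  psi e %/ ('X ^+ 2 - 1).

From mathcomp Require Import all_boot all_order all_algebra.
From mathcomp Require Import ring.
Set Implicit Arguments. Unset Strict Implicit. Unset Printing Implicit Defensive.
Import GRing.Theory Num.Theory.
Local Open Scope ring_scope.

(* Induction on the tree by removing a leaf v with neighbour u.  For the
   principal minors M_R(T) of -zD + A (degrees taken in the tree R), expanding
   along the row and column of v and noting that u loses one degree gives
     M_R(T) = -z M_{R-v}(T-v) + (z^2 - 1) M_{R-v}(T-v-u)      (v, u in T),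
   together with simpler identities when T omits v or u.  At z = +-1 the last
   term vanishes, so each psi_i only picks up a factor -+1, while the quotient
   psi~ obeys psi~_R = -z psi~_{R-v} + psi_{R-v,u}, whence (p - 1)(-+1)^(p-2). *)

Section Masking.

Variables (R : comPzRingType) (n : nat).
Implicit Types (A B : 'M[R]_n) (S T : {set 'I_n}).

(* Replacing the rows and columns indexed by S with those of the identity
   makes [\det (mask_mx S A)] the principal minor of A on the complement of S,
   while keeping every matrix indexed by 'I_n. *)
Definition mask_mx S A : 'M[R]_n :=
  \matrix_(i, j) if (i \in S) || (j \in S) then (i == j)%:R else A i j.

Lemma mask_mx0 A : mask_mx set0 A = A.
Proof. by apply/matrixP => i j; rewrite !mxE !inE. Qed.

Lemma mask_mx_comp S T A : mask_mx T (mask_mx S A) = mask_mx (S :|: T) A.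
Proof.
apply/matrixP => i j; rewrite !mxE !inE.
by case: (i \in S); case: (j \in S); case: (i \in T); case: (j \in T).
Qed.

Lemma tr_mask_mx S A : (mask_mx S A)^T = mask_mx S A^T.
Proof. by apply/matrixP => i j; rewrite !mxE orbC eq_sym. Qed.

Lemma expand_det_row_delta A j a :
  (forall b, A j b = a * (j == b)%:R) -> \det A = a * \det (row' j (col' j A)).
Proof.
move=> Aj; rewrite (expand_det_row _ j) (bigD1 j) //= big1 ?addr0.
  by rewrite Aj eqxx mulr1 /cofactor -signr_odd addnn odd_double mul1r.
by move=> k /negbTE kj; rewrite Aj eq_sym kj mulr0 mul0r.
Qed.

Lemma det_mask_mx1 A j : \det (mask_mx [set j] A) = \det (row' j (col' j A)).
Proof.
rewrite (@expand_det_row_delta _ j 1) => [|b]; last by rewrite mxE inE eqxx mul1r.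
rewrite mul1r; congr (\det _); apply/matrixP => a b; rewrite !mxE !inE.
by rewrite eq_sym (negbTE (neq_lift j a)) eq_sym (negbTE (neq_lift j b)).
Qed.

Lemma det_row_delta A j a :
  (forall b, A j b = a * (j == b)%:R) -> \det A = a * \det (mask_mx [set j] A).
Proof. by move=> Aj; rewrite det_mask_mx1; apply: expand_det_row_delta. Qed.

Lemma det_col_delta A j a :
  (forall b, A b j = a * (b == j)%:R) -> \det A = a * \det (mask_mx [set j] A).
Proof.
move=> Aj; rewrite -det_tr -[\det (mask_mx _ _)]det_tr tr_mask_mx.
by apply: det_row_delta => b; rewrite mxE Aj eq_sym.
Qed.

Lemma det_xcol A u v : u != v -> \det (xcol u v A) = - \det A.
Proof.
by move=> uv; rewrite xcolE det_mulmx det_perm perm.odd_tperm uv expr1 mulrN1.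
Qed.

Lemma det_row_add_delta A B u a :
  (forall b, B u b = A u b + a * (u == b)%:R) -> row' u B = row' u A ->
  \det B = \det A + a * \det (mask_mx [set u] A).
Proof.
move=> Bu BA.
pose C := \matrix_(i, j) if i == u then (u == j)%:R else A i j : R.
have -> : \det B = 1 * \det A + a * \det C.
  apply: (determinant_multilinear (i0 := u)).
  - by apply/rowP => b; rewrite !mxE eqxx Bu mul1r.
  - by rewrite BA.
  - apply/matrixP => i j; rewrite !mxE eq_sym (negbTE (neq_lift u i)).
    by move/matrixP: BA => /(_ i j); rewrite !mxE.
rewrite mul1r (@det_row_delta C u 1) ?mul1r => [|b]; last by rewrite mxE eqxx mul1r.
congr (_ + _ * \det _); apply/matrixP => i j; rewrite !mxE !inE.
by case: (i =P u) => [->|] //=; rewrite eqxx.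
Qed.

Lemma det_pendant A v u a : u != v ->
  (forall b, A v b = a * (v == b)%:R + (u == b)%:R) ->
  (forall b, A b v = a * (b == v)%:R + (b == u)%:R) ->
  \det A = a * \det (mask_mx [set v] A) - \det (mask_mx [set v; u] A).
Proof.
move=> uv Av Acv; have vu : v != u by rewrite eq_sym.
pose B1 := \matrix_(i, j) if i == v then (v == j)%:R else A i j : R.
pose B2 := \matrix_(i, j) if i == v then (u == j)%:R else A i j : R.
have -> : \det A = a * \det B1 + 1 * \det B2.
  apply: (determinant_multilinear (i0 := v)).
  - by apply/rowP => b; rewrite !mxE !eqxx Av mul1r.
  - by apply/matrixP => i j; rewrite !mxE eq_sym (negbTE (neq_lift v i)).
  - by apply/matrixP => i j; rewrite !mxE eq_sym (negbTE (neq_lift v i)).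
have -> : mask_mx [set v] A = mask_mx [set v] B1.
  apply/matrixP => i j; rewrite !mxE !inE.
  by case: (i =P v) => //= ->; case: (j =P v) => //= ->.
rewrite [\det B1](@det_row_delta B1 v 1) ?mul1r => [|b]; last first.
  by rewrite mxE eqxx mul1r.
congr (_ + _).
(* Swapping columns u and v turns column u of B2 into the unit vector e_u. *)
pose C := xcol u v B2.
rewrite -[\det B2]opprK -(det_xcol B2 uv); congr (- _).
rewrite (@det_col_delta C u 1) ?mul1r => [|b]; last first.
  rewrite mxE perm.tpermL mxE mul1r.
  case: (b =P v) => [->|bv]; first by rewrite (negbTE uv) (negbTE vu).
  by rewrite Acv; move/eqP/negbTE: bv => ->; rewrite mulr0 add0r.
rewrite (@det_row_delta _ v 1) ?mul1r => [|b]; last first.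
  rewrite mxE !inE mul1r (negbTE vu) /=.
  case: (b =P u) => [->|bu] //=; rewrite !mxE eqxx.
  case: (b =P v) => [->|bv]; first by rewrite perm.tpermR !eqxx.
  rewrite perm.tpermD; last 2 first.
  - by apply/eqP => h; apply: bu.
  - by apply/eqP => h; apply: bv.
  by rewrite eq_sym (introF eqP bu) eq_sym (introF eqP bv).
rewrite !mask_mx_comp; congr (\det _); apply/matrixP => i j; rewrite !mxE !inE.
case: (i =P u) => [_|iu] //; case: (i =P v) => [_|iv] //;
case: (j =P u) => [_|ju] //; case: (j =P v) => [_|jv] //=.
rewrite perm.tpermD //.
- by apply/eqP => h; apply: ju; rewrite h.
- by apply/eqP => h; apply: jv; rewrite h.
Qed.

End Masking.

(* -zD + A with the degrees replaced by an arbitrary weight c, which lets the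
   leaf removal keep the degrees of the larger tree. *)
Definition pencil p (e : rel 'I_p) (c : 'I_p -> nat) : 'M[{poly rat}]_p :=
  \matrix_(i, j) ((- 'X) * ((i == j)%:R * (c i)%:R) + (e i j)%:R).

Definition pminor p (e : rel 'I_p) (c : 'I_p -> nat) (T : {set 'I_p}) :=
  \det (mask_mx (~: T) (pencil e c)).

Lemma setC_setD1 p (T : {set 'I_p}) x : ~: (T :\ x) = ~: T :|: [set x].
Proof. by rewrite setDE setCI setCK. Qed.

Lemma setD1C p (T : {set 'I_p}) x y : T :\ x :\ y = T :\ y :\ x.
Proof. by rewrite !setDDl setUC. Qed.

Section PencilMinors.

Variables (p : nat) (e : rel 'I_p).
Implicit Types (c : 'I_p -> nat) (T : {set 'I_p}).

Lemma eq_pminor c c' T : {in T, c =1 c'} -> pminor e c T = pminor e c' T.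
Proof.
move=> cc'; congr (\det _); apply/matrixP => i j; rewrite !mxE !inE.
by case iT: (i \in T) => //=; case: (j \in T) => //=; rewrite cc'.
Qed.

Lemma pminor_isolated c T v : v \in T -> (forall x, x \in T -> ~~ e v x) ->
  pminor e c T = - 'X * (c v)%:R * pminor e c (T :\ v).
Proof.
move=> vT ve; rewrite /pminor setC_setD1 -mask_mx_comp.
apply: det_row_delta => b; rewrite !mxE !inE vT /=.
case bT: (b \in T) => /=; last first.
  have -> : (v == b) = false by apply/eqP => vb; rewrite -vb vT in bT.
  by rewrite mulr0.
rewrite (negbTE (ve b bT)) addr0.
by rewrite -mulrA (mulrC (c v)%:R).
Qed.

Lemma pminor_weightS c c' T u : u \in T -> c u = (c' u).+1 ->
    (forall k, k \in T -> k != u -> c k = c' k) ->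
  pminor e c T = pminor e c' T - 'X * pminor e c' (T :\ u).
Proof.
move=> uT cu cc'; rewrite /pminor setC_setD1 -mask_mx_comp -mulNr.
apply: det_row_add_delta.
  move=> b; rewrite !mxE !inE uT /=.
  case bT: (b \in T) => /=; last first.
    have -> : (u == b) = false by apply/eqP => ub; rewrite -ub uT in bT.
    by rewrite mulr0 addr0.
  rewrite cu; case: (u =P b) => _; rewrite ?mul1r ?mul0r ?mulr0 ?addr0 //.
  by rewrite -addn1 natrD mulrDr addrAC.
apply/matrixP => i j; rewrite !mxE !inE.
case iT: (lift u i \in T) => //=; case: (j \in T) => //=.
by rewrite cc' ?iT // eq_sym neq_lift.
Qed.

Hypothesis e_sym : symmetric e.

Lemma pminor_expand_pendant c T v u : v \in T -> u \in T -> u != v -> e v u ->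
    (forall x, x \in T -> e v x -> x = u) -> c v = 1%N ->
  pminor e c T = - 'X * pminor e c (T :\ v) - pminor e c (T :\ v :\ u).
Proof.
move=> vT uT uv vu vleaf cv.
have ev b : b \in T -> e v b = (u == b).
  move=> bT; case evb: (e v b); first by rewrite (vleaf b bT evb) eqxx.
  by apply/esym/eqP => ub; rewrite -ub vu in evb.
rewrite /pminor !setC_setD1 -!mask_mx_comp [X in _ - \det X]mask_mx_comp.
apply: det_pendant => // b;
  rewrite !mxE !inE vT /=; case bT: (b \in T) => /=.
- by rewrite cv mulr1 ev.
- have -> : (v == b) = false by apply/eqP => vb; rewrite -vb vT in bT.
  have -> : (u == b) = false by apply/eqP => ub; rewrite -ub uT in bT.
  by rewrite mulr0 add0r.
- rewrite e_sym ev // (eq_sym b u) (eq_sym b v).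
  by case: (v =P b) => [<-|_]; rewrite ?cv ?mulr1 ?mul0r.
- have -> : (b == v) = false by apply/eqP => bv; rewrite bv vT in bT.
  have -> : (b == u) = false by apply/eqP => bu; rewrite bu uT in bT.
  by rewrite mulr0 add0r.
Qed.

End PencilMinors.

Section InducedSubgraph.

Variables (p : nat) (e : rel 'I_p).
Hypotheses (e_sym : symmetric e) (e_irr : irreflexive e).
Implicit Types (R : {set 'I_p}) (v u : 'I_p).

Definition induced R : rel 'I_p := [rel a b | [&& e a b, a \in R & b \in R]].

Definition connected_in R :=
  forall x y, x \in R -> y \in R -> connect (induced R) x y.

Definition deg_in R k := #|[set w in R | e k w]|.

Definition pendant_in R v u :=
  [/\ v \in R, u \in R, e v u & forall x, x \in R -> e v x -> x = u].

Lemma connected_in_setD1 R v u :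
  pendant_in R v u -> connected_in R -> connected_in (R :\ v).
Proof.
move=> [vR _ _ vleaf] Rcon x y; rewrite !inE => /andP [xv xR] /andP [yv yR].
have /connectP [q xq yq] := Rcon x y xR yR.
move: yv; rewrite yq; case: (shortenP xq) => {xq yq}q xq uq _ qv.
(* a shortest path through the leaf v would enter and leave it via u *)
have vq : v \notin q.
  apply/negP => vq; move: xq uq qv; case/splitPr: vq => q1 q2.
  rewrite cat_path /= => /andP [_ /andP [/and3P [lv lR _] q2p]].
  have lu : last x q1 = u by apply: vleaf; rewrite // e_sym.
  case: q2 q2p => [|w q2] /=; first by rewrite last_cat /= eqxx.
  move=> /andP [/and3P [vw _ wR] _] uq _.
  have wu : w = u by apply: vleaf.
  move: uq; rewrite -[_ && _]/(uniq ((x :: q1) ++ [:: v, w & q2])) cat_uniq.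
  case/and3P => _ /hasPn /(_ w) + _.
  by rewrite wu -lu mem_last !inE eqxx orbT => /(_ isT).
have qv' a : a \in x :: q -> a != v.
  by rewrite inE => /orP [/eqP -> // | aq]; apply: contraNneq vq => <-.
apply/connectP; exists q => //.
apply: (sub_in_path (P := mem (x :: q))) xq; last by apply/allP.
move=> a b aq bq /and3P [ab aR bR].
by rewrite /induced /= !inE ab aR bR qv' ?qv'.
Qed.

Lemma exists_maximal_path R : R != set0 -> exists v t,
  [/\ v \in R, uniq (v :: t), path (induced R) v t &
      forall x, x \in R -> e v x -> x \in t].
Proof.
case/set0Pn => r rR.
pose P n := [exists v, exists t : n.-tuple 'I_p,
               [&& v \in R, uniq (v :: t) & path (induced R) v t]].
have P0 : exists n, P n.
  by exists 0%N; apply/existsP; exists r; apply/existsP; exists [tuple]; rewrite rR.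
have Pp n : P n -> (n <= p)%N.
  case/existsP => v /existsP [t /and3P [_ vt _]].
  have := max_card (mem (v :: t)).
  by rewrite (card_uniqP vt) card_ord /= size_tuple => /ltnW.
case: (ex_maxnP P0 Pp) => N /existsP [v /existsP [t /and3P [vR vt vtp]]] Nmax.
exists v, t; split=> // x xR vx; apply: contraT => xt.
suff /Nmax : P N.+1 by rewrite ltnn.
apply/existsP; exists x; apply/existsP; exists [tuple of v :: t].
rewrite xR /= -[_ && uniq t]/(uniq (v :: t)) vt vtp andbT /induced /= e_sym vx xR vR.
rewrite !andbT inE negb_or xt andbT.
by apply: contraTneq vx => ->; rewrite e_irr.
Qed.

Lemma path_chord_cycle R v u s x : acyclic e ->
  uniq (v :: u :: s) -> path (induced R) v (u :: s) -> x \in s -> ~~ e v x.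
Proof.
move=> e_acyc + + xs; case/splitPr: xs => s1 s2 vus vusp.
apply/negP => vx.
apply: (negP (e_acyc (v :: rcons (u :: s1) x) _ _)).
- by rewrite /= size_rcons.
- move: vus; rewrite -(cat1s x s2) catA cats1.
  by rewrite -[uniq _]/(uniq ((v :: rcons (u :: s1) x) ++ s2)) cat_uniq => /andP [].
- have sub : subrel (induced R) e by move=> a b /and3P [].
  rewrite /cycle rcons_path last_rcons e_sym vx andbT.
  move: vusp; rewrite -cat_cons cat_path rcons_path => /andP [/(sub_path sub) -> /=].
  by case/andP => /sub.
Qed.

Lemma exists_pendant R : acyclic e -> (1 < #|R|)%N -> connected_in R ->
  exists v u, pendant_in R v u.
Proof.
move=> e_acyc R2 Rcon.
have [|v [t [vR vt vtp vnt]]] := @exists_maximal_path R.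
  by rewrite -card_gt0; apply: ltnW.
have [w vw wR] : exists2 w, e v w & w \in R.
  have /card_gt0P [y] : (0 < #|R :\ v|)%N by move: R2; rewrite (cardsD1 v R) vR.
  rewrite !inE => /andP [yv yR].
  have /connectP [[|w q] /=] := Rcon v y vR yR.
    by move=> _ yv'; rewrite yv' eqxx in yv.
  by case/andP => /and3P [vw _ wR] _ _; exists w.
case: t vt vtp vnt => [|u s] vt vtp vnt; first by have := vnt w wR vw.
move: (vtp) => /= /andP [/and3P [vu _ uR] _].
exists v, u; split=> // x xR vx.
have := vnt x xR vx; rewrite inE => /orP [/eqP // | xs].
by have := path_chord_cycle e_acyc vt vtp xs; rewrite vx.
Qed.

End InducedSubgraph.

Section PendantRemoval.

Variables (p : nat) (e : rel 'I_p) (R : {set 'I_p}) (v u : 'I_p).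
Hypotheses (e_sym : symmetric e) (e_irr : irreflexive e)
  (vu_pendant : pendant_in e R v u).

Let vR : v \in R. Proof. by case: vu_pendant. Qed.
Let uR : u \in R. Proof. by case: vu_pendant. Qed.
Let vu : e v u. Proof. by case: vu_pendant. Qed.
Let vleaf x : x \in R -> e v x -> x = u. Proof. by case: vu_pendant => _ _ _; apply. Qed.

Lemma pendant_neq : u != v.
Proof. by apply: contraTneq vu => ->; rewrite e_irr. Qed.

Lemma deg_in_pendant : deg_in e R v = 1%N.
Proof.
rewrite /deg_in (_ : [set w in R | e v w] = [set u]) ?cards1 //.
apply/setP => w; rewrite !inE; apply/andP/eqP => [[wR vw] | ->]; first exact: vleaf.
by rewrite uR vu.
Qed.

Lemma deg_in_setD1 k : deg_in e R k = (e k v + deg_in e (R :\ v) k)%N.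
Proof.
rewrite /deg_in (cardsD1 v [set w in R | e k w]) !inE vR /=.
by congr (_ + _)%N; apply: eq_card => w; rewrite !inE; case: (w =P v).
Qed.

Lemma deg_in_setD1_neighbor : deg_in e R u = (deg_in e (R :\ v) u).+1.
Proof. by rewrite deg_in_setD1 e_sym vu. Qed.

Lemma deg_in_setD1_other k : k \in R :\ v -> k != u ->
  deg_in e R k = deg_in e (R :\ v) k.
Proof.
rewrite inE => /andP [_ kR] ku; rewrite deg_in_setD1.
case: (boolP (e k v)) => // kv; rewrite e_sym in kv.
by rewrite (vleaf kR kv) eqxx in ku.
Qed.

Section Minors.

Variable T : {set 'I_p}.
Hypothesis TR : T \subset R.

Local Notation dR := (deg_in e R).
Local Notation dR' := (deg_in e (R :\ v)).

Let eq_deg_in_other k : k \in T :\ v -> k != u -> dR k = dR' k.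
Proof.
move=> kT; apply: deg_in_setD1_other.
by move: kT; rewrite !inE => /andP [-> /(subsetP TR)].
Qed.

Lemma pminor_remove_pendant : v \in T -> u \in T ->
  pminor e dR T =
  - 'X * pminor e dR' (T :\ v) + ('X ^+ 2 - 1) * pminor e dR' (T :\ v :\ u).
Proof.
move=> vT uT.
have uTv : u \in T :\ v by rewrite !inE pendant_neq.
rewrite (pminor_expand_pendant e_sym vT uT pendant_neq vu) ?deg_in_pendant //; last first.
  by move=> x /(subsetP TR); apply: vleaf.
rewrite (pminor_weightS (c := dR) (c' := dR') e uTv) ?deg_in_setD1_neighbor //.
rewrite (@eq_pminor _ _ dR dR'); first by ring.
by move=> k /setD1P [ku kT]; apply: eq_deg_in_other.
Qed.

Lemma pminor_remove_pendant_leaf : v \notin T -> u \in T ->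
  pminor e dR T = pminor e dR' T - 'X * pminor e dR' (T :\ u).
Proof.
move=> vT uT; apply: pminor_weightS; rewrite ?deg_in_setD1_neighbor //.
move=> k kT; apply: eq_deg_in_other; rewrite !inE kT andbT.
by apply: contraNneq vT => <-.
Qed.

Lemma pminor_remove_pendant_neighbor : v \in T -> u \notin T ->
  pminor e dR T = - 'X * pminor e dR' (T :\ v).
Proof.
move=> vT uT; rewrite (pminor_isolated _ vT) ?deg_in_pendant ?mulr1; last first.
  move=> x xT; apply: contraNN uT => vx.
  by rewrite -(vleaf (subsetP TR x xT) vx).
congr (_ * _); apply: eq_pminor => k kT; apply: eq_deg_in_other => //.
by apply: contraNneq uT => <-; move: kT; rewrite inE => /andP [].
Qed.

End Minors.

End PendantRemoval.

(* psi_i(+-1) and psi~(+-1) for the graph induced on R, with n = #|R| - 1 *)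
Definition minors_at_pm1 p (e : rel 'I_p) (R : {set 'I_p}) (n : nat) :=
  (forall i, i \in R -> (pminor e (deg_in e R) (R :\ i)).[1] = (-1) ^+ n /\
                        (pminor e (deg_in e R) (R :\ i)).[-1] = 1) /\
  exists2 q, pminor e (deg_in e R) R = ('X ^+ 2 - 1) * q &
             q.[1] = n%:R * (-1) ^+ n.-1 /\ q.[-1] = n%:R.

Section MinorsAtPm1.

Variables (p : nat) (e : rel 'I_p).
Hypotheses (e_sym : symmetric e) (e_irr : irreflexive e).

Lemma minors_at_pm1_set1 r : minors_at_pm1 e [set r] 0.
Proof.
have deg_r : deg_in e [set r] r = 0%N.
  apply/eqP; rewrite cards_eq0; apply/eqP/setP => w.
  by rewrite !inE; case: (w =P r) => [->|]; rewrite ?e_irr ?andbF.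
split=> [i|].
  rewrite inE => /eqP ->; rewrite setDv /pminor setC0.
  have -> : mask_mx [set: 'I_p] (pencil e (deg_in e [set r])) = 1%:M.
    by apply/matrixP => a b; rewrite !mxE inE.
  by rewrite det1 !hornerC.
exists 0; rewrite ?horner0 ?mul0r // mulr0.
rewrite (@pminor_isolated _ _ _ _ r) ?set11 ?deg_r ?mulr0 ?mul0r // => x.
by rewrite inE => /eqP ->; rewrite e_irr.
Qed.

Lemma minors_at_pm1_pendant R v u n : pendant_in e R v u ->
  minors_at_pm1 e (R :\ v) n -> minors_at_pm1 e R n.+1.
Proof.
move=> vu_pendant [minorsR' [q' Rq' [q'1 q'N1]]].
have [vR uR _ _] := vu_pendant; have uv := pendant_neq e_irr vu_pendant.
have vRi i : i != v -> v \in R :\ i by rewrite !inE vR andbT eq_sym.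
have uR' : u \in R :\ v by rewrite !inE uv.
have [Qu1 QuN1] := minorsR' u uR'.
split=> [i iR|].
- have [-> | iv] := eqVneq i v.
    rewrite (pminor_remove_pendant_leaf e_sym vu_pendant) ?subD1set ?setD11 //.
    by rewrite Rq' !hornerE Qu1 QuN1 exprS; split; ring.
  have [-> | iu] := eqVneq i u.
    rewrite (pminor_remove_pendant_neighbor e_sym vu_pendant) ?subD1set ?setD11 ?vRi //.
    by rewrite setD1C !hornerE Qu1 QuN1 exprS; split; ring.
  have uRi : u \in R :\ i by rewrite !inE uR andbT eq_sym.
  have iR' : i \in R :\ v by rewrite !inE iv.
  have [A1 AN1] := minorsR' i iR'.
  rewrite (pminor_remove_pendant e_sym e_irr vu_pendant) ?subD1set ?vRi //.
  by rewrite setD1C !hornerE A1 AN1 exprS; split; ring.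
- exists (- 'X * q' + pminor e (deg_in e (R :\ v)) (R :\ v :\ u)).
    by rewrite (pminor_remove_pendant e_sym e_irr vu_pendant) // Rq'; ring.
  rewrite !hornerE q'1 q'N1 Qu1 QuN1; split; last by rewrite -addn1 natrD; ring.
  by case: n {minorsR' Rq' q'1 q'N1 Qu1 QuN1} => [|m] /=;
    rewrite ?expr0 ?exprS -?[m.+2]addn1 -?[m.+1]addn1 ?natrD; ring.
Qed.

Lemma minors_at_pm1_tree (R : {set 'I_p}) n :
  acyclic e -> #|R| = n.+1 -> connected_in e R -> minors_at_pm1 e R n.
Proof.
move=> e_acyc; elim: n R => [|n IHn] R Rn Rcon.
  have /cards1P [r ->] : #|R| == 1%N by rewrite Rn.
  exact: minors_at_pm1_set1.
have [|v [u vu_pendant]] := exists_pendant e_sym e_irr e_acyc _ Rcon; first by rewrite Rn.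
apply: (minors_at_pm1_pendant vu_pendant); apply: IHn.
  by have [vR _ _ _] := vu_pendant; move: Rn; rewrite (cardsD1 v) vR => -[].
exact: connected_in_setD1 vu_pendant Rcon.
Qed.

End MinorsAtPm1.

Theorem lemma2p5 (p : nat) (e : rel 'I_p) :
  (2 <= p)%N -> is_tree e ->
  (forall i : 'I_p,
      (psi_i e i).[1] = (-1) ^+ (p - 1) /\ (psi_i e i).[-1] = 1 ^+ (p - 1)) /\
  (psit e).[1] = (p - 1)%:R * (-1) ^+ (p - 2) /\
  (psit e).[-1] = (p - 1)%:R * 1 ^+ (p - 2).
Proof.
move=> p2 [[e_sym e_irr] e_con e_acyc].
have Tcon : connected_in e [set: 'I_p].
  move=> x y _ _; rewrite (@eq_connect _ _ e) //.
  by move=> a b; rewrite /induced /= !inE !andbT.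
have Tcard : #|[set: 'I_p]| = (p - 1).+1 by rewrite cardsT card_ord subn1 prednK // ltnW.
have [Tdel [q Tq [q1 qN1]]] := minors_at_pm1_tree e_sym e_irr e_acyc Tcard Tcon.
have degT : pencil e (deg_in e [set: 'I_p]) = zDA e.
  apply/matrixP => a b; rewrite !mxE /deg_in; congr (_ * (_ * _%:R) + _).
  by apply: eq_card => w; rewrite !inE.
split=> [i|].
  have [] := Tdel i (in_setT i).
  by rewrite /pminor setC_setD1 setCT set0U degT det_mask_mx1 expr1n.
have psiE : psi e = ('X ^+ 2 - 1) * q by rewrite -Tq /pminor setCT mask_mx0 degT.
have X21_neq0 : ('X ^+ 2 - 1 : {poly rat}) != 0.
  apply: contraTneq isT => /(congr1 (horner^~ 0)).
  by rewrite !hornerE => /eqP; rewrite oppr_eq0 oner_eq0.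
by rewrite /psit psiE mulKp // q1 qN1 expr1n mulr1 -subn1 -subnDA.
Qed.
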